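(* For every instance $\mathcal{I}$ of the Square Strip Packing Problem, $h_{\text{BL}}^{\text{worst}}(\mathcal{I})\le 16\cdot h_{\text{OPT}}(\mathcal{I})$. In particular, the bottom-left algorithm has constant approximation ratio for the Square Strip Packing Problem.
   Context: Square Strip Packing Problem: squares with side lengths at most $W$ are to be packed without rotation into the strip $[0,W]\times[0,\infty)$ with pairwise disjoint interiors; the height of a packing is the maximum top coordinate of a square, and $h_{\text{OPT}}(\mathcal{I})$ is the minimum height of a feasible packing. Bottom-left algorithm: given an ordering, place the first square at $(0,0)$ and each subsequent square at a feasible position $(x,y)$ (lower-left corner) with $(y,x)$ lexicographically minimal. $h_{\text{BL}}^{\text{worst}}(\mathcal{I})$ is the maximum over all orderings of the height of the bottom-left packing. *)

From HB Require Import structures.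
From mathcomp Require Import all_boot all_order all_algebra all_fingroup.
From mathcomp Require Import reals.
Set Implicit Arguments. Unset Strict Implicit. Unset Printing Implicit Defensive.
Import Order.TTheory GRing.Theory Num.Theory.
Local Open Scope ring_scope.

(* An instance: n squares with side lengths s i, strip width W.
   A position is the lower-left corner (x, y). *)

Section SSP.
Variables (R : realType) (n : nat) (W : R) (s : 'I_n -> R).

Definition in_strip (i : 'I_n) (x y : R) : Prop :=
  0 <= x /\ x + s i <= W /\ 0 <= y.

Definition disj_int (i : 'I_n) (x y : R) (j : 'I_n) (x' y' : R) : Prop :=
  x + s i <= x' \/ x' + s j <= x \/ y + s i <= y' \/ y' + s j <= y.

Definition is_packing (p : 'I_n -> R * R) : Prop :=
  (forall i, in_strip i (p i).1 (p i).2) /\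
  (forall i j, i != j -> disj_int i (p i).1 (p i).2 j (p j).1 (p j).2).

Definition height (p : 'I_n -> R * R) : R :=
  \big[Num.max/0]_(i < n) ((p i).2 + s i).

Definition feasible_pos (p : 'I_n -> R * R) (A : 'I_n -> bool)
  (i : 'I_n) (x y : R) : Prop :=
  in_strip i x y /\ forall j, A j -> disj_int i x y j (p j).1 (p j).2.

Definition lex_le (x1 y1 x2 y2 : R) : Prop :=
  y1 < y2 \/ (y1 = y2 /\ x1 <= x2).

(* p is the bottom-left packing for the ordering sigma: the k-th square
   sigma k is placed at a feasible position (w.r.t. the squares
   sigma 0, ..., sigma (k-1)) whose (y,x) is lexicographically minimal.
   (For k = 0 this forces the position (0,0).) *)
Definition is_BL_packing (sigma : {perm 'I_n}) (p : 'I_n -> R * R) : Prop :=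
  forall k : 'I_n,
    let A := fun j : 'I_n => (perm.perm_inv sigma j < k)%N in
    feasible_pos p A (sigma k) (p (sigma k)).1 (p (sigma k)).2 /\
    forall x y, feasible_pos p A (sigma k) x y ->
      lex_le (p (sigma k)).1 (p (sigma k)).2 x y.

End SSP.

(* In an optimal packing every horizontal line meets squares of total width at
   most W, so the squares have total area at most W * h_OPT.

   In the bottom-left packing consider a square i of side b at height y. Every
   position (x, t) with t < y was infeasible when i was placed, so it overlaps
   an earlier square. Suppose all squares of side < 2b/3 lying below i end by
   height tl. For t in (tl, y - b) the squares meeting the band (t, t + b) then
   have side >= 2b/3 and, widened by b to the left, cover [0, W - b]; hence
   their total width is at least W/4. Integrating over t bounds W (y - b - tl)
   by 10 times the area of the squares in the band [tl, y]. Taking for tl the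
   top of the highest small square below i and inducting on the number of
   smaller squares gives W (y + b) <= 10 area + 6 W b <= 16 W h_OPT. *)

From mathcomp Require Import all_boot all_order all_algebra all_fingroup.
From mathcomp Require Import reals ring lra.
Import Order.TTheory GRing.Theory Num.Theory.
Local Open Scope ring_scope.

Section Overlap.
Context {R : realFieldType}.
Implicit Types l m r c d t w z K : R.

Definition clamp c d z : R := Num.max c (Num.min z d).

(* For [c <= d], the length of [l, r] ∩ [c, d] (zero when [r < l]). *)
Definition overlap l r c d : R := clamp c d (Num.max l r) - clamp c d l.

Definition weight_at l r w t : R := if (l < t) && (t < r) then w else 0.

Variant clamp_spec c d z : R -> Prop :=
  | ClampLo of z <= c : clamp_spec c d z c
  | ClampIn of c <= z & z <= d : clamp_spec c d z z
  | ClampHi of d <= z : clamp_spec c d z d.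

Lemma clampP {c d} z : c <= d -> clamp_spec c d z (clamp c d z).
Proof.
move=> cd; rewrite /clamp; case: (leP z d) => zd.
- by case: (leP c z) => cz; [apply: ClampIn | apply/ClampLo/ltW].
- by rewrite max_r //; apply/ClampHi/ltW.
Qed.

Lemma clamp_le c d z z' : c <= d -> z <= z' -> clamp c d z <= clamp c d z'.
Proof. by move=> cd zz'; case: (clampP z cd) => ?; case: (clampP z' cd) => ?; lra. Qed.

Lemma clamp_ge c d z : c <= d -> c <= clamp c d z.
Proof. by move=> cd; case: (clampP z cd) => ?; lra. Qed.

Lemma clamp_le_sup c d z : c <= d -> clamp c d z <= d.
Proof. by move=> cd; case: (clampP z cd) => ?; lra. Qed.

Lemma overlap_ge0 l r {c d} : c <= d -> 0 <= overlap l r c d.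
Proof. by move=> cd; rewrite subr_ge0 clamp_le // le_max lexx. Qed.

Lemma overlap_le l r {c d} : c <= d -> l <= r -> overlap l r c d <= r - l.
Proof.
move=> cd lr; rewrite /overlap max_r //.
by case: (clampP r cd) => ?; case: (clampP l cd) => ?; lra.
Qed.

Lemma overlap_full l r {c d} : c <= l -> l <= r -> r <= d -> overlap l r c d = r - l.
Proof.
move=> cl lr rd; have cd : c <= d by lra.
by rewrite /overlap max_r //; case: (clampP r cd) => ?; case: (clampP l cd) => ?; lra.
Qed.

Lemma overlap_nil l r c d : r <= l -> overlap l r c d = 0.
Proof. by move=> rl; rewrite /overlap max_l // subrr. Qed.

Lemma overlap_below l r {c d} : c <= d -> r <= c -> overlap l r c d = 0.
Proof.
move=> cd rc; have [lr|rl] := leP l r; last exact/overlap_nil/ltW.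
by rewrite /overlap max_r //; case: (clampP r cd) => ?; case: (clampP l cd) => ?; lra.
Qed.

Lemma overlap_above l r {c d} : c <= d -> d <= l -> overlap l r c d = 0.
Proof.
move=> cd dl; have [lr|rl] := leP l r; last exact/overlap_nil/ltW.
by rewrite /overlap max_r //; case: (clampP r cd) => ?; case: (clampP l cd) => ?; lra.
Qed.

Lemma clamp_split {c m d} z : c <= m -> m <= d ->
  clamp c d z = clamp c m z + clamp m d z - m.
Proof.
move=> cm md; have cd : c <= d by lra.
by case: (clampP z cd) => ?; case: (clampP z cm) => ?; case: (clampP z md) => ?; lra.
Qed.

Lemma overlap_split l r {c m d} : c <= m -> m <= d ->
  overlap l r c d = overlap l r c m + overlap l r m d.
Proof. by move=> cm md; rewrite /overlap !(clamp_split _ cm md); lra. Qed.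

Lemma overlap_split_interval l m r c d : l <= m -> m <= r ->
  overlap l r c d = overlap l m c d + overlap m r c d.
Proof. by move=> lm mr; rewrite /overlap !max_r //; [lra | exact: le_trans mr]. Qed.

Lemma overlap_le_window l r {c d d'} : c <= d -> d <= d' ->
  overlap l r c d <= overlap l r c d'.
Proof.
by move=> cd dd'; rewrite [leRHS](overlap_split l r cd dd') lerDl overlap_ge0.
Qed.

(* The extra part [yk - b, yk] meets the window in at most
   [min(b, y - yk) <= 3/2 * min(sk, y - yk)]. *)
Lemma overlap_shift_le (yk sk b tl y : R) : 0 < b -> 2/3 * b <= sk -> tl <= y - b ->
  overlap (yk - b) (yk + sk) tl (y - b) <= 5/2 * overlap yk (yk + sk) tl y.
Proof.
move=> b0 bsk tlyb; have tly : tl <= y by lra.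
rewrite (overlap_split_interval (yk - b) yk (yk + sk)); [|lra|lra].
have := overlap_le_window yk (yk + sk) tlyb (ltac:(lra) : y - b <= y).
suff : overlap (yk - b) yk tl (y - b) <= 3/2 * overlap yk (yk + sk) tl y by lra.
have ov0 := overlap_ge0 yk (yk + sk) tly.
have [yyk|yky] := leP y yk; first by rewrite overlap_above; [lra|lra|lra].
have [yktl|tlyk] := leP yk tl; first by rewrite overlap_below; [lra|lra|lra].
have lo_b := overlap_le (yk - b) yk tlyb (ltac:(lra) : yk - b <= yk).
have lo_y : overlap (yk - b) yk tl (y - b) <= y - yk.
  rewrite /overlap max_r; last lra.
  by case: (clampP yk tlyb) => ?; case: (clampP (yk - b) tlyb) => ?; lra.
rewrite [overlap yk _ _ _]/overlap max_r; last lra.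
by case: (clampP (yk + sk) tly) => ?; case: (clampP yk tly) => ?; lra.
Qed.

Lemma weight_at_ge0 (l r w t : R) : 0 <= w -> 0 <= weight_at l r w t.
Proof. by rewrite /weight_at; case: ifP. Qed.

Lemma weight_at_in (l r w t : R) : l < t -> t < r -> weight_at l r w t = w.
Proof. by move=> lt tr; rewrite /weight_at lt tr. Qed.

Lemma weight_at_clamp l r w {c d t} : c <= d -> c < t -> t < d ->
  weight_at l r w t = weight_at (clamp c d l) (clamp c d (Num.max l r)) w t.
Proof.
move=> cd ct td; rewrite /weight_at; congr (if _ then _ else _).
have [lr|rl] := leP l r.
- case: (clampP l cd) => *; case: (clampP r cd) => *;
  by apply/idP/idP => /andP[? ?]; apply/andP; split; lra.
- by apply/idP/idP => /andP[? ?]; lra.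
Qed.

Lemma sum_overlap_split {T : Type} (s : seq T) (l r w : T -> R) {c m d} :
  c <= m -> m <= d ->
  \sum_(k <- s) w k * overlap (l k) (r k) c d =
  \sum_(k <- s) w k * overlap (l k) (r k) c m +
  \sum_(k <- s) w k * overlap (l k) (r k) m d.
Proof.
move=> cm md; rewrite -big_split; apply: eq_bigr => k _.
by rewrite (overlap_split _ _ cm md) mulrDr.
Qed.

(* Integrates over [c, d] a lower bound on the step function
   [t |-> \sum_k weight_at (l k) (r k) (w k) t]: induction on the intervals,
   splitting [c, d] at the clamped endpoints of the first one. *)
Lemma sum_overlap_ge {T : Type} (s : seq T) (l r w : T -> R) c d K : c <= d ->
  (forall t, c < t -> t < d -> K <= \sum_(k <- s) weight_at (l k) (r k) (w k) t) ->
  K * (d - c) <= \sum_(k <- s) w k * overlap (l k) (r k) c d.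
Proof.
elim: s c d K => [|k0 s IHs] c d K cd H.
  rewrite big_nil; move: cd; rewrite le_eqVlt => /predU1P[->|cd].
    by rewrite subrr mulr0.
  have K0 : K <= 0 by have := H ((c + d) / 2); rewrite big_nil; apply; lra.
  by rewrite mulr_le0_ge0 // subr_ge0 ltW.
set lp := clamp c d (l k0); set rp := clamp c d (Num.max (l k0) (r k0)).
have c_lp : c <= lp by exact: clamp_ge.
have lp_rp : lp <= rp by apply: clamp_le; rewrite ?le_max ?lexx.
have rp_d : rp <= d by exact: clamp_le_sup.
have rest_ge t : c < t -> t < d ->
    K - weight_at lp rp (w k0) t <= \sum_(k <- s) weight_at (l k) (r k) (w k) t.
  move=> ct td; have := H t ct td.
  by rewrite big_cons (weight_at_clamp _ _ _ cd ct td); lra.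
have IHl : K * (lp - c) <= \sum_(k <- s) w k * overlap (l k) (r k) c lp.
  apply: IHs => // t ct tlp; have := rest_ge t ct ltac:(lra).
  by rewrite /weight_at; case: ifP => [/andP[]|]; lra.
have IHm : (K - w k0) * (rp - lp) <= \sum_(k <- s) w k * overlap (l k) (r k) lp rp.
  apply: IHs => // t lpt trp; have := rest_ge t ltac:(lra) ltac:(lra).
  by rewrite /weight_at lpt trp.
have IHr : K * (d - rp) <= \sum_(k <- s) w k * overlap (l k) (r k) rp d.
  apply: IHs => // t rpt td; have := rest_ge t ltac:(lra) td.
  by rewrite /weight_at; case: ifP => [/andP[]|]; lra.
rewrite big_cons (sum_overlap_split _ _ _ _ c_lp (le_trans lp_rp rp_d)).
rewrite (sum_overlap_split _ _ _ _ lp_rp rp_d) -/(overlap _ _ _ _).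
rewrite [overlap _ _ _ _]/overlap -/lp -/rp.
lra.
Qed.

Lemma sum_overlap_le {T : Type} (s : seq T) (l r w : T -> R) c d K : c <= d ->
  (forall t, c < t -> t < d -> \sum_(k <- s) weight_at (l k) (r k) (w k) t <= K) ->
  \sum_(k <- s) w k * overlap (l k) (r k) c d <= K * (d - c).
Proof.
move=> cd H; rewrite -[leLHS]opprK -[leRHS]opprK lerN2 -mulNr -sumrN.
under eq_bigr do rewrite -mulNr.
apply: sum_overlap_ge => // t ct td.
rewrite lerNl -sumrN; under eq_bigr do rewrite /weight_at (fun_if -%R) opprK oppr0.
exact: H.
Qed.

End Overlap.

Lemma sumr_ge_term {R : realDomainType} {I : finType} {F : I -> R} (i : I) :
  (forall j, 0 <= F j) -> F i <= \sum_j F j.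
Proof. by move=> F0; rewrite (bigD1 i) //= lerDl sumr_ge0. Qed.

Lemma sumr_le1_single {R : realDomainType} (I : finType) (F : I -> R) :
  (forall i, 0 <= F i <= 1) -> (forall i j, F i != 0 -> F j != 0 -> i = j) ->
  \sum_i F i <= 1.
Proof.
move=> F01 F_single; have [i Fi|F0] := pickP (fun i => F i != 0).
- rewrite (bigD1 i) //= big1 ?addr0; first by case/andP: (F01 i).
  by move=> j ji; apply: contraNeq ji => Fj; rewrite (F_single j i).
- by rewrite big1 ?ler01 // => i _; apply/eqP/negbFE/F0.
Qed.

Section Packing.
Context {R : realType} {n : nat} {W : R} (s : 'I_n -> R).
Hypothesis W_gt0 : 0 < W.
Hypothesis s_gt0 : forall i, 0 < s i.
Implicit Types (p : 'I_n -> R * R) (c m d : R).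

Definition area p c d : R :=
  \sum_(k < n) s k * overlap (p k).2 ((p k).2 + s k) c d.

Lemma le_height p i : (p i).2 + s i <= height s p.
Proof. exact: (le_bigmax 0 (fun i => (p i).2 + s i) i). Qed.

Lemma height_ge0 p : (forall i, 0 <= (p i).2) -> 0 <= height s p.
Proof.
move=> y0; rewrite /height; elim/big_ind: _ => // [x y x0 y0'|i _].
- by rewrite le_max x0.
- by rewrite addr_ge0 // ltW.
Qed.

Lemma area_split p {c m d} : c <= m -> m <= d ->
  area p c d = area p c m + area p m d.
Proof. exact: sum_overlap_split. Qed.

Lemma area_term_ge0 p k {c d} : c <= d ->
  0 <= s k * overlap (p k).2 ((p k).2 + s k) c d.
Proof. by move=> cd; apply: mulr_ge0; [exact/ltW | exact: overlap_ge0]. Qed.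

Lemma area_ge0 p {c d} : c <= d -> 0 <= area p c d.
Proof. by move=> cd; apply: sumr_ge0 => k _; apply: area_term_ge0. Qed.

Lemma area_le_window p {c d d'} : c <= d -> d <= d' -> area p c d <= area p c d'.
Proof. by move=> cd dd'; rewrite (area_split p cd dd') lerDl area_ge0. Qed.

Lemma area_le_sum_sq p {c d} : c <= d -> area p c d <= \sum_(k < n) s k * s k.
Proof.
move=> cd; apply: ler_sum => k _; apply: ler_wpM2l; first exact/ltW.
have le_top : (p k).2 <= (p k).2 + s k by rewrite lerDl ltW.
by have := overlap_le _ _ cd le_top; lra.
Qed.

Section OptimalPacking.
Context {p : 'I_n -> R * R} (p_packing : is_packing W s p).

(* No point lies in the interior of two squares. *)
Lemma packing_width_at t :
  \sum_(k < n) weight_at (p k).2 ((p k).2 + s k) (s k) t <= W.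
Proof.
have [in_strip disj] := p_packing.
set w := fun k => weight_at (p k).2 ((p k).2 + s k) 1 t.
have -> : \sum_(k < n) weight_at (p k).2 ((p k).2 + s k) (s k) t =
          \sum_(k < n) w k * overlap (p k).1 ((p k).1 + s k) 0 W.
  apply: eq_bigr => k _; have [x0 [xW _]] := in_strip k.
  rewrite (overlap_full _ _ x0 _ xW); last by rewrite lerDl ltW.
  by rewrite [(p k).1 + _]addrC addrK /w /weight_at; case: ifP; rewrite ?mul1r ?mul0r.
rewrite -[leRHS]mul1r -[W in leRHS]subr0.
apply: sum_overlap_le => [|u _ _]; first exact: ltW.
apply: sumr_le1_single => [k|k k'].
  by rewrite /w /weight_at /=; repeat case: ifP => _; rewrite ?lexx ?ler01.
rewrite /w /weight_at /=.
case: ifP => [/andP[? ?]|]; last by rewrite eqxx.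
case: ifP => [/andP[? ?] _|]; last by rewrite eqxx.
case: ifP => [/andP[? ?]|]; last by rewrite eqxx.
case: ifP => [/andP[? ?] _|]; last by rewrite eqxx.
apply/eqP; apply: contraT => /disj; rewrite /disj_int; lra.
Qed.

Lemma packing_area : \sum_(k < n) s k * s k <= W * height s p.
Proof.
have [in_strip _] := p_packing.
have h0 : 0 <= height s p by apply: height_ge0 => i; have [_ []] := in_strip i.
have <- : \sum_(k < n) s k * overlap (p k).2 ((p k).2 + s k) 0 (height s p) =
          \sum_(k < n) s k * s k.
  apply: eq_bigr => k _; have [_ [_ y0]] := in_strip k.
  rewrite (overlap_full _ _ y0 _ (le_height p k)); last by rewrite lerDl ltW.
  by rewrite [(p k).2 + _]addrC addrK.
rewrite -[height s p in leRHS]subr0.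
by apply: sum_overlap_le => // t _ _; exact: packing_width_at.
Qed.

End OptimalPacking.

Section BottomLeft.
Context {sigma : {perm 'I_n}} {p : 'I_n -> R * R} (p_BL : is_BL_packing W s sigma p).

Lemma BL_in_strip i : in_strip W s i (p i).1 (p i).2.
Proof. by have := p_BL (perm_inv sigma i); rewrite /= permKV => -[[]]. Qed.

(* Every position strictly below square [i] was infeasible when [i] was placed. *)
Lemma BL_blocked i x t : 0 <= x -> x + s i <= W -> 0 <= t -> t < (p i).2 ->
  exists j, [/\ (p j).1 < x + s i, x < (p j).1 + s j,
                (p j).2 < t + s i & t < (p j).2 + s j].
Proof.
move=> x0 xW t0 t_lt.
have := p_BL (perm_inv sigma i); rewrite /= permKV => -[_ BL_min].
have [j /and4P[? ? ? ?]|free] := pickP (fun j => [&& (p j).1 < x + s i,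
  x < (p j).1 + s j, (p j).2 < t + s i & t < (p j).2 + s j]); first by exists j.
have : lex_le (p i).1 (p i).2 x t.
  apply: BL_min; split=> [|j _]; first by rewrite /in_strip.
  move/negbT: (free j); rewrite !negb_and -!leNgt /disj_int.
  by case/or4P; tauto.
rewrite /lex_le; lra.
Qed.

Definition smalls_below_end_by i tl := forall k,
  s k < 2/3 * s i -> (p k).2 < (p i).2 -> (p k).2 + s k <= tl.

(* The squares crossing the band (t, t + s i) block every position at height t,
   and none of them is small since t > tl. *)
Lemma BL_width_at i tl t : 0 <= tl -> smalls_below_end_by i tl ->
  tl < t -> t < (p i).2 - s i ->
  W / 4 <= \sum_(k < n) weight_at ((p k).2 - s i) ((p k).2 + s k) (s k) t.
Proof.
move=> tl0 small tl_t t_lt; set L := \sum_(k < n) _.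
have [x0 [xW _]] := BL_in_strip i; have si0 := s_gt0 i.
have crossing_big k : (p k).2 - s i < t -> t < (p k).2 + s k -> 2/3 * s i <= s k.
  move=> lo hi; rewrite leNgt; apply/negP => small_k.
  by have := small k small_k ltac:(lra); lra.
have L_big : 2/3 * s i <= L.
  have [j [? ? ? ?]] := BL_blocked i 0 t (lexx 0) ltac:(lra) ltac:(lra) ltac:(lra).
  apply: le_trans (crossing_big j _ _) _; [lra | lra |].
  have := sumr_ge_term j
    (fun k => weight_at_ge0 ((p k).2 - s i) ((p k).2 + s k) (s k) t (ltW (s_gt0 k))).
  by rewrite weight_at_in; [|lra|lra].
have L_cover : W - s i <= 5/2 * L.
  pose cross k := weight_at ((p k).2 - s i) ((p k).2 + s k) 1 t.
  have cross_ge0 k : 0 <= cross k by apply: weight_at_ge0.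
  have := sum_overlap_ge (index_enum 'I_n) (fun k => (p k).1 - s i)
    (fun k => (p k).1 + s k) cross 0 (W - s i) 1 ltac:(lra).
  rewrite mul1r subr0 => /(_ _)/le_trans; apply.
  - move=> u u0 uW.
    have [k [? ? ? ?]] := BL_blocked i u t (ltW u0) ltac:(lra) ltac:(lra) ltac:(lra).
    have := sumr_ge_term k
      (fun k => weight_at_ge0 ((p k).1 - s i) ((p k).1 + s k) (cross k) u (cross_ge0 k)).
    have cross_k : cross k = 1 by apply: weight_at_in; lra.
    by rewrite weight_at_in ?cross_k; [apply | lra | lra].
  - rewrite /L mulr_sumr; apply: ler_sum => k _; rewrite /cross /weight_at.
    case: ifP => [/andP[lo hi]|_]; last by rewrite mul0r mulr0.
    have := crossing_big k lo hi.
    have W_ge : 0 <= W - s i by lra.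
    have := overlap_le ((p k).1 - s i) ((p k).1 + s k) W_ge ltac:(lra).
    lra.
lra.
Qed.

Lemma BL_band_area i tl : 0 <= tl -> smalls_below_end_by i tl -> tl <= (p i).2 - s i ->
  W * ((p i).2 - s i - tl) <= 10 * area p tl (p i).2.
Proof.
move=> tl0 small tl_le; have si0 := s_gt0 i.
have := sum_overlap_ge (index_enum 'I_n) (fun k => (p k).2 - s i)
  (fun k => (p k).2 + s k) s _ _ _ tl_le (fun t => BL_width_at i tl t tl0 small).
suff : \sum_(k < n) s k * overlap ((p k).2 - s i) ((p k).2 + s k) tl ((p i).2 - s i)
       <= 5/2 * area p tl (p i).2 by lra.
rewrite /area mulr_sumr; apply: ler_sum => k _.
have [big|small_k] := leP (2/3 * s i) (s k).
  rewrite mulrCA; apply: ler_wpM2l; first exact/ltW.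
  exact: overlap_shift_le.
have [yk_lt|yk_ge] := ltP (p k).2 (p i).2.
  rewrite (overlap_below _ _ tl_le (small k small_k yk_lt)) mulr0.
  by apply: mulr_ge0; [lra | apply: area_term_ge0; lra].
rewrite (overlap_above _ _ tl_le) ?mulr0; last lra.
by apply: mulr_ge0; [lra | apply: area_term_ge0; lra].
Qed.

(* The slack 4 = 6 * 2/3 is what the induction in [BL_top_area] supplies. *)
Lemma BL_top_step i tl : 0 <= tl -> tl <= (p i).2 + s i -> smalls_below_end_by i tl ->
  W * tl <= 10 * area p 0 tl + 4 * (W * s i) ->
  W * ((p i).2 + s i) <= 10 * area p 0 ((p i).2 + s i) + 6 * (W * s i).
Proof.
move=> tl0 tl_top small below_tl; have [_ [_ y0]] := BL_in_strip i.
have si0 := s_gt0 i.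
have [tl_le|tl_gt] := leP tl ((p i).2 - s i).
  have := BL_band_area i tl tl0 small tl_le.
  have := area_split p tl0 (ltac:(lra) : tl <= (p i).2).
  have := area_le_window p y0 (ltac:(lra) : (p i).2 <= (p i).2 + s i).
  lra.
have := area_le_window p tl0 tl_top.
have : W * ((p i).2 + s i) <= W * (tl + 2 * s i) by rewrite ler_pM2l //; lra.
lra.
Qed.

Lemma BL_top_area i :
  W * ((p i).2 + s i) <= 10 * area p 0 ((p i).2 + s i) + 6 * (W * s i).
Proof.
have [m] := ubnP #|[pred k | s k < s i]|; elim: m i => // m IHm i smaller_i.
have [_ [_ y0]] := BL_in_strip i; have si0 := s_gt0 i.
pose small_below := [pred k | (s k < 2/3 * s i) && ((p k).2 < (p i).2)].
have [j0 j0_small|no_small] := pickP small_below; last first.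
  apply: (BL_top_step i 0) => //; first lra.
  - by move=> k sk yk; move: (no_small k); rewrite /= sk yk.
  - by rewrite mulr0; have := area_ge0 p (lexx 0); have := mulr_gt0 W_gt0 si0; lra.
case: (arg_maxP (fun k => (p k).2 + s k) j0_small) => j /andP[sj yj] j_top.
have [_ [_ yj0]] := BL_in_strip j; have sj0 := s_gt0 j.
have smaller_j : (#|[pred k | (s k < s j)%R]| < m)%N.
  rewrite -ltnS (leq_trans _ smaller_i) // ltnS; apply/proper_card/properP; split.
    by apply/subsetP => k; rewrite !inE => sk; lra.
  by exists j; rewrite !inE ?ltxx //; lra.
apply: (BL_top_step i ((p j).2 + s j)); [lra | lra | |].
  by move=> k sk yk; apply: j_top; rewrite /= sk.
have := IHm j smaller_j.
have : W * s j <= W * (2/3 * s i) by rewrite ler_pM2l //; lra.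
lra.
Qed.

End BottomLeft.
End Packing.

Theorem corollary4 (R : realType) (n : nat) (W : R) (s : 'I_n -> R)
  (hW : 0 < W) (hs : forall i, 0 < s i /\ s i <= W)
  (sigma : {perm 'I_n}) (pBL pOPT : 'I_n -> R * R) :
  is_BL_packing W s sigma pBL ->
  is_packing W s pOPT ->
  height s pBL <= 16 * height s pOPT.
Proof.
move=> BL OPT; have s_gt0 i : 0 < s i by case: (hs i).
have opt_y0 i : 0 <= (pOPT i).2 by have [_ []] := OPT.1 i.
have H_ge0 := height_ge0 s s_gt0 pOPT opt_y0.
have s_le_H i : s i <= height s pOPT.
  by have := le_height s pOPT i; have := opt_y0 i; lra.
apply: bigmax_le => [|i _]; first lra.
rewrite -(ler_pM2l hW); have [_ [_ y0]] := BL_in_strip s BL i.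
have := BL_top_area s hW s_gt0 BL i.
have top_ge0 : 0 <= (pBL i).2 + s i by have := s_gt0 i; lra.
have := area_le_sum_sq s s_gt0 pBL top_ge0.
have := packing_area s hW s_gt0 OPT.
have : W * s i <= W * height s pOPT by rewrite ler_pM2l.
lra.
Qed.
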